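(* Let $\lambda>0$, let ${\mathbf{C}}_{\min}\le{\mathbf{C}}_{\max}$ be real symmetric $d\times d$ matrices and ${\mathbf{b}}_{\min}\le{\mathbf{b}}_{\max}$ vectors in $\mathbb{R}^d$. For fixed ${\boldsymbol{\theta}}\in\mathbb{R}^d$, the inner maximization problem $$\max_{{\mathbf{C}},{\mathbf{b}}}\ {\boldsymbol{\theta}}^T{\mathbf{C}}{\boldsymbol{\theta}}-2{\mathbf{b}}^T{\boldsymbol{\theta}}+\lambda\|{\boldsymbol{\theta}}\|_2^2\quad\text{s.t.}\quad {\mathbf{C}}_{\min}\le{\mathbf{C}}\le{\mathbf{C}}_{\max},\ {\mathbf{b}}_{\min}\le{\mathbf{b}}\le{\mathbf{b}}_{\max},\ {\mathbf{C}}\succeq0$$ can be equivalently formulated as $$\min_{{\mathbf{A}},{\mathbf{B}},{\mathbf{d}},{\mathbf{e}},{\mathbf{H}}}\ -\langle{\mathbf{b}}_{\min},{\mathbf{d}}\rangle+\langle{\mathbf{b}}_{\max},{\mathbf{e}}\rangle-\langle{\mathbf{C}}_{\min},{\mathbf{A}}\rangle+\langle{\mathbf{C}}_{\max},{\mathbf{B}}\rangle+\lambda\|{\boldsymbol{\theta}}\|^2$$ $$\text{s.t.}\quad -{\boldsymbol{\theta}}{\boldsymbol{\theta}}^T-{\mathbf{A}}+{\mathbf{B}}-{\mathbf{H}}=0,\quad 2{\boldsymbol{\theta}}-{\mathbf{d}}+{\mathbf{e}}=0,\quad {\mathbf{A}},{\mathbf{B}},{\mathbf{d}},{\mathbf{e}}\ge0,\quad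 {\mathbf{H}}\succeq0.$$ Therefore the min-max problem $\min_{{\boldsymbol{\theta}}}\max_{{\mathbf{C}},{\mathbf{b}}}$ of the first objective over the first constraint set can be alternatively written as the single minimization of the second objective over ${\boldsymbol{\theta}},{\mathbf{A}},{\mathbf{B}},{\mathbf{d}},{\mathbf{e}},{\mathbf{H}}$ subject to the same constraints.
   Context: Matrix and vector inequalities ($\le$, $\ge0$) are entrywise; $\succeq$ is the positive semidefinite order; $\langle\cdot,\cdot\rangle$ is the Euclidean/Frobenius inner product. ${\mathbf{A}},{\mathbf{B}},{\mathbf{H}}$ range over $d\times d$ matrices and ${\mathbf{d}},{\mathbf{e}}$ over $\mathbb{R}^d$. In the paper ${\mathbf{C}}_{\min}={\mathbf{C}}_0-c\boldsymbol{\Delta}$, ${\mathbf{C}}_{\max}={\mathbf{C}}_0+c\boldsymbol{\Delta}$, ${\mathbf{b}}_{\min}={\mathbf{b}}_0-c\boldsymbol{\delta}$, ${\mathbf{b}}_{\max}={\mathbf{b}}_0+c\boldsymbol{\delta}$ are confidence bounds for the second moments ${\mathbf{X}}^T{\mathbf{X}}$, ${\mathbf{X}}^T{\mathbf{y}}$ of a data set with missing entries. *)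

From HB Require Import structures.
From mathcomp Require Import all_boot all_order all_algebra.
From mathcomp Require Import all_classical all_reals.
From mathcomp Require Import ereal.
Set Implicit Arguments. Unset Strict Implicit. Unset Printing Implicit Defensive.
Import Order.TTheory GRing.Theory Num.Theory.
Local Open Scope ring_scope.
Local Open Scope classical_set_scope.

Section Defs.
Variables (R : realType) (d : nat).

Definition mx_le (m n : nat) (A B : 'M[R]_(m, n)) : Prop :=
  forall i j, A i j <= B i j.

Definition sym_mx (A : 'M[R]_d) : Prop := A^T = A.

Definition psd (A : 'M[R]_d) : Prop :=
  sym_mx A /\ forall x : 'cV[R]_d, 0 <= (x^T *m A *m x) 0 0.

Definition frob (m n : nat) (A B : 'M[R]_(m, n)) : R :=
  \sum_(i < m) \sum_(j < n) A i j * B i j.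

Definition qform (C : 'M[R]_d) (x : 'cV[R]_d) : R := (x^T *m C *m x) 0 0.

Definition sqnorm (x : 'cV[R]_d) : R := \sum_(i < d) x i 0 ^+ 2.

Definition primal_obj (lam : R) (th : 'cV[R]_d) (C : 'M[R]_d) (b : 'cV[R]_d) : R :=
  qform C th - 2 * frob b th + lam * sqnorm th.

Definition primal_feas (Cmin Cmax : 'M[R]_d) (bmin bmax : 'cV[R]_d)
    (C : 'M[R]_d) (b : 'cV[R]_d) : Prop :=
  [/\ mx_le Cmin C, mx_le C Cmax, mx_le bmin b, mx_le b bmax & psd C].

Definition dual_obj (lam : R) (Cmin Cmax : 'M[R]_d) (bmin bmax : 'cV[R]_d)
    (th : 'cV[R]_d) (A B : 'M[R]_d) (dv e : 'cV[R]_d) : R :=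
  - frob bmin dv + frob bmax e - frob Cmin A + frob Cmax B + lam * sqnorm th.

Definition dual_feas (th : 'cV[R]_d) (A B : 'M[R]_d) (dv e : 'cV[R]_d)
    (H : 'M[R]_d) : Prop :=
  [/\ (- (th *m th^T) - A + B - H = 0),
      2 *: th - dv + e = 0,
      mx_le 0 A, mx_le 0 B &
      [/\ mx_le 0 dv, mx_le 0 e & psd H]].

Definition inner_max (lam : R) (Cmin Cmax : 'M[R]_d) (bmin bmax th : 'cV[R]_d)
  : \bar R :=
  ereal_sup [set x : \bar R | exists C b,
      primal_feas Cmin Cmax bmin bmax C b /\ x = (primal_obj lam th C b)%:E].

Definition inner_min (lam : R) (Cmin Cmax : 'M[R]_d) (bmin bmax th : 'cV[R]_d)
  : \bar R :=
  ereal_inf [set x : \bar R | exists A B dv e H,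
      dual_feas th A B dv e H /\
      x = (dual_obj lam Cmin Cmax bmin bmax th A B dv e)%:E].

End Defs.

(* Weak duality is termwise: for feasible (C, b) and (A, B, d, e, H) the gap
   is a sum of products of nonnegative numbers plus <C, H>, which is
   nonnegative for PSD C and H.  Conversely, eliminating A, B, d, e shows that
   the dual value at th is kappa + inf_{H >= 0} phi(th th^T + H), where phi is
   the support function of the box [Cmin, Cmax] and kappa collects the
   optimal b-part and lam |th|^2.
   The function g(N) = inf_{H >= 0} phi(N + H) is sublinear, so by Hahn-Banach
   some linear functional <C, .> lies below g and agrees with it at th th^T.
   After symmetrisation C lies in the box (as g <= phi) and is PSD (as
   g(-x x^T) <= phi(0) = 0), so it is primal feasible and attains the dual
   value.  If phi is unbounded below on the PSD cone, the dual value is -oo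
   and weak duality suffices.  The min-max statement then only interchanges
   two infima. *)

From HB Require Import structures.
From mathcomp Require Import all_boot all_order all_algebra.
From mathcomp Require Import all_classical all_reals.
From mathcomp Require Import ereal.
From mathcomp Require Import ring lra.
Import Order.TTheory GRing.Theory Num.Theory.
Local Open Scope ring_scope.
Local Open Scope classical_set_scope.
Set Implicit Arguments. Unset Strict Implicit. Unset Printing Implicit Defensive.

Section HahnBanach.
Variables (R : realType) (V : lmodType R) (p : V -> R).
Hypothesis p_subadd : forall x y, p (x + y) <= p x + p y.
Hypothesis p_poshom : forall (a : R) x, 0 < a -> p (a *: x) = a * p x.

Lemma sublinear0 : p 0 = 0.
Proof. by have := p_poshom (0 : V) (ltr0n R 2); rewrite scaler0; lra. Qed.

Lemma sublinear_scale_ge (t : R) x : t * p x <= p (t *: x).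
Proof.
case: (ltgtP t 0) => [t_lt0 | t_gt0 | ->]; last by rewrite mul0r scale0r sublinear0.
- have := p_subadd (t *: x) ((- t) *: x).
  have Nt_gt0 : 0 < - t by rewrite oppr_gt0.
  by rewrite -scalerDl addrN scale0r sublinear0 (p_poshom _ Nt_gt0); lra.
- by rewrite p_poshom.
Qed.

(* [W x a] reads "the partial linear functional maps [x] to [a]"; the new
   value [g] on [v] is any point between the sup and the inf that
   domination by [p] forces. *)
Lemma hahn_banach_step (W : V -> R -> Prop) :
  W 0 0 -> (forall x a y b, W x a -> W y b -> W (x + y) (a + b)) ->
  (forall k x a, 0 < k -> W x a -> W (k *: x) (k * a)) ->
  (forall x a, W x a -> a <= p x) ->
  forall v, exists g, forall x a t, W x a -> a + t * g <= p (x + t *: v).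
Proof.
move=> W0 WD WZ Wp v.
pose A := [set r | exists x a, W x a /\ r = a - p (x - v)].
have A_ub y b : W y b -> ubound A (p (y + v) - b).
  move=> Wb r [x [a [Wa ->]]]; have := Wp _ _ (WD _ _ _ _ Wa Wb).
  have := p_subadd (x - v) (y + v).
  by rewrite addrACA addNr addr0; lra.
have A_sup : has_sup A.
  split; first by exists (0 - p (0 - v)), 0, 0.
  by exists (p (0 + v) - 0); apply: A_ub.
exists (sup A) => x a t Wa.
case: (ltgtP t 0) => [t_lt0 | t_gt0 | ->]; last by rewrite mul0r scale0r !addr0; apply: Wp.
- have s_gt0 : 0 < - t by rewrite oppr_gt0.
  have le_sup : (- t)^-1 * a - p ((- t)^-1 *: x - v) <= sup A.
    apply: sup_upper_bound => //; exists ((- t)^-1 *: x), ((- t)^-1 * a).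
    by split => //; apply: WZ; rewrite ?invr_gt0.
  have -> : x + t *: v = (- t) *: ((- t)^-1 *: x - v).
    by rewrite scalerBr scalerA divff ?gt_eqF // scale1r scaleNr opprK.
  rewrite p_poshom //.
  have := ler_wpM2l (ltW s_gt0) le_sup.
  by rewrite mulrBr mulrA divff ?gt_eqF // mul1r; lra.
- have sup_le : sup A <= p (t^-1 *: x + v) - t^-1 * a.
    by apply: ge_sup; [case: A_sup | apply: A_ub; apply: WZ; rewrite ?invr_gt0].
  have -> : x + t *: v = t *: (t^-1 *: x + v).
    by rewrite scalerDr scalerA divff ?gt_eqF // scale1r.
  rewrite p_poshom //.
  have := ler_wpM2l (ltW t_gt0) sup_le.
  by rewrite mulrBr mulrA divff ?gt_eqF // mul1r; lra.
Qed.

Lemma hahn_banach_span (I : eqType) (v : I -> V) x0 (s : seq I) : uniq s ->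
  exists c : I -> R, forall t0 (t : I -> R),
    t0 * p x0 + \sum_(i <- s) t i * c i <= p (t0 *: x0 + \sum_(i <- s) t i *: v i).
Proof.
elim: s => [_|j s IH /andP[j_notin_s s_uniq]].
  by exists (fun=> 0) => t0 t; rewrite !big_nil !addr0; apply: sublinear_scale_ge.
have [c c_dom] := IH s_uniq.
pose W x a := exists t0 (t : I -> R), x = t0 *: x0 + \sum_(i <- s) t i *: v i /\
   a = t0 * p x0 + \sum_(i <- s) t i * c i.
have W0 : W 0 0.
  exists 0, (fun=> 0); rewrite scale0r mul0r !add0r.
  by split; rewrite big1 // => i _; rewrite ?scale0r ?mul0r.
have WD x a y b : W x a -> W y b -> W (x + y) (a + b).
  move=> [t0 [t [-> ->]]] [u0 [u [-> ->]]].
  exists (t0 + u0), (fun i => t i + u i); split.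
    rewrite scalerDl addrACA -big_split /=.
    by congr (_ + _); apply: eq_bigr => i _; rewrite scalerDl.
  rewrite mulrDl addrACA -big_split /=.
  by congr (_ + _); apply: eq_bigr => i _; rewrite mulrDl.
have WZ k x a : 0 < k -> W x a -> W (k *: x) (k * a).
  move=> _ [t0 [t [-> ->]]]; exists (k * t0), (fun i => k * t i); split.
    rewrite scalerDr scalerA scaler_sumr; congr (_ + _).
    by apply: eq_bigr => i _; rewrite scalerA.
  rewrite mulrDr mulrA mulr_sumr; congr (_ + _).
  by apply: eq_bigr => i _; rewrite mulrA.
have Wp x a : W x a -> a <= p x by move=> [t0 [t [-> ->]]]; apply: c_dom.
have [g g_dom] := hahn_banach_step W0 WD WZ Wp (v j).
exists (fun i => if i == j then g else c i) => t0 t.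
rewrite !big_cons eqxx (eq_big_seq (fun i => t i * c i)); last first.
  by move=> i i_in_s; case: eqP => // eq_ij; move: j_notin_s; rewrite -eq_ij i_in_s.
rewrite addrCA [t j *: v j + _]addrC !addrA.
have := g_dom _ _ (t j) (ex_intro _ t0 (ex_intro _ t (conj erefl erefl))); lra.
Qed.

End HahnBanach.

Section Frobenius.
Variables (R : realType) (m n : nat).
Implicit Types A B : 'M[R]_(m, n).

Lemma frobDr A B1 B2 : frob A (B1 + B2) = frob A B1 + frob A B2.
Proof.
rewrite /frob -big_split; apply: eq_bigr => i _.
by rewrite -big_split; apply: eq_bigr => j _; rewrite mxE mulrDr.
Qed.

Lemma frobZr A (k : R) B : frob A (k *: B) = k * frob A B.
Proof.
rewrite /frob mulr_sumr; apply: eq_bigr => i _.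
by rewrite mulr_sumr; apply: eq_bigr => j _; rewrite mxE mulrCA.
Qed.

Lemma frobNr A B : frob A (- B) = - frob A B.
Proof. by rewrite -scaleN1r frobZr mulN1r. Qed.

Lemma frobC A B : frob A B = frob B A.
Proof. by apply: eq_bigr => i _; apply: eq_bigr => j _; rewrite mulrC. Qed.

End Frobenius.

Lemma frob_trmx (R : realType) m n (A : 'M[R]_(m, n)) (B : 'M[R]_(n, m)) :
  frob A B^T = frob A^T B.
Proof.
rewrite /frob exchange_big; apply: eq_bigr => j _; apply: eq_bigr => i _.
by rewrite !mxE.
Qed.

Section QuadraticForms.
Variables (R : realType) (d : nat).
Implicit Types (C H : 'M[R]_d) (x u : 'cV[R]_d).

Lemma qformE C x : qform C x = \sum_i \sum_j x i 0 * C i j * x j 0.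
Proof.
rewrite /qform mxE; under eq_bigr do rewrite mxE big_distrl /=.
rewrite exchange_big; apply: eq_bigr => i _; apply: eq_bigr => j _.
by rewrite mxE.
Qed.

Lemma qform_frob C x : qform C x = frob C (x *m x^T).
Proof.
rewrite qformE; apply: eq_bigr => i _; apply: eq_bigr => j _.
by rewrite !mxE big_ord1 !mxE; ring.
Qed.

Lemma qformDZ H x u (t : R) : sym_mx H ->
  qform H (x + t *: u) = qform H x + 2 * t * (u^T *m H *m x) 0 0 + t ^+ 2 * qform H u.
Proof.
move=> symH.
have bilinC : (x^T *m H *m u) 0 0 = (u^T *m H *m x) 0 0.
  transitivity ((x^T *m H *m u)^T 0 0); first by rewrite [RHS]mxE.
  by rewrite !trmx_mul trmxK symH mulmxA.
rewrite /qform !(linearD, linearZ) /= !mulmxDl -!scalemxAl.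
move: bilinC; move: (x^T *m H *m x) (u^T *m H *m x) (x^T *m H *m u) (u^T *m H *m u).
by move=> a b c e bilinC; rewrite !mxE bilinC; ring.
Qed.

Lemma bilin_delta H r x :
  ((delta_mx r (0 : 'I_1))^T *m H *m x) 0 0 = \sum_j H r j * x j 0.
Proof. by rewrite trmx_delta -rowE mxE; apply: eq_bigr => j _; rewrite mxE. Qed.

Lemma bilin_delta_delta H r j :
  ((delta_mx r (0 : 'I_1))^T *m H *m delta_mx j (0 : 'I_1)) 0 0 = H r j.
Proof.
rewrite bilin_delta (bigD1 j) //= big1 => [|i /negbTE neq_ij].
  by rewrite mxE eqxx mulr1 addr0.
by rewrite mxE neq_ij mulr0.
Qed.

Lemma psd0 : psd (0 : 'M[R]_d).
Proof. by split=> [|x]; rewrite ?/sym_mx ?trmx0 // mulmx0 mul0mx mxE. Qed.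

Lemma psdD H1 H2 : psd H1 -> psd H2 -> psd (H1 + H2).
Proof.
case=> sym1 q1 [sym2 q2]; split; first by rewrite /sym_mx linearD /= sym1 sym2.
by move=> x; rewrite mulmxDr mulmxDl mxE addr_ge0.
Qed.

Lemma psdZ (k : R) H : 0 <= k -> psd H -> psd (k *: H).
Proof.
move=> k_ge0 [symH qH]; split; first by rewrite /sym_mx linearZ /= symH.
by move=> x; rewrite -scalemxAr -scalemxAl mxE mulr_ge0.
Qed.

Lemma psd_outer x : psd (x *m x^T).
Proof.
split=> [|y]; first by rewrite /sym_mx trmx_mul trmxK.
have -> : y^T *m (x *m x^T) *m y = (x^T *m y)^T *m (x^T *m y).
  by rewrite trmx_mul trmxK !mulmxA.
by rewrite mxE big_ord1 mxE -expr2 sqr_ge0.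
Qed.

Lemma psd_entryC H i j : psd H -> H i j = H j i.
Proof. by case=> symH _; rewrite -[in LHS]symH mxE. Qed.

Lemma psd_diag_ge0 H r : psd H -> 0 <= H r r.
Proof. by case=> _ qH; rewrite -bilin_delta_delta; apply: qH. Qed.

(* Otherwise [e_j + t e_r] has negative quadratic value for a suitable [t]. *)
Lemma psd_diag0_row0 H r j : psd H -> H r r = 0 -> H r j = 0.
Proof.
move=> [symH qH] Hrr0; apply/eqP/negP => Hrj_neq0.
pose t := - (H j j + 1) / (2 * H r j).
have := qH (delta_mx j 0 + t *: delta_mx r 0).
rewrite -/(qform _ _) qformDZ // /qform !bilin_delta_delta Hrr0.
have -> : H j j + 2 * t * H r j + t ^+ 2 * 0 = -1 by rewrite /t; field; apply/negP.
by rewrite ler0N1.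
Qed.

Lemma sub_outer_rowE H r (k : R) i j :
  (H - k *: ((row r H)^T *m (row r H)^T^T)) i j = H i j - k * (H r i * H r j).
Proof. by rewrite !mxE big_ord1 !mxE. Qed.

Lemma psd_sub_pivot H r : psd H -> 0 < H r r ->
  let h := (row r H)^T in psd (H - (H r r)^-1 *: (h *m h^T)).
Proof.
move=> psdH Hrr_gt0 h; have [symH qH] := psdH; split.
  apply/matrixP => i j.
  by rewrite mxE !sub_outer_rowE (psd_entryC _ _ psdH) [H r j * _]mulrC.
move=> x; pose hx := \sum_j H r j * x j 0.
have -> : (x^T *m (H - (H r r)^-1 *: (h *m h^T)) *m x) 0 0
          = qform H x - (H r r)^-1 * (hx * hx).
  rewrite -/(qform _ _) !qformE /hx big_distrl /= mulr_sumr -sumrB.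
  apply: eq_bigr => i _; rewrite big_distrr /= mulr_sumr -sumrB.
  by apply: eq_bigr => j _; rewrite sub_outer_rowE; ring.
have := qH (x + (- hx / H r r) *: delta_mx r 0).
rewrite -/(qform _ _) qformDZ // bilin_delta /qform bilin_delta_delta -/hx.
have -> : (x^T *m H *m x) 0 0 + 2 * (- hx / H r r) * hx + (- hx / H r r) ^+ 2 * H r r
          = (x^T *m H *m x) 0 0 - (H r r)^-1 * (hx * hx).
  by field; rewrite gt_eqF.
by [].
Qed.

End QuadraticForms.

(* Induction on a prefix of indices outside of which [H] vanishes: each step
   peels off the last row/column of the support, with a rank-one correction
   [h h^T / H r r] whose Frobenius product with [C] is a value of the
   quadratic form of [C]. *)
Lemma frob_psd_ge0 (R : realType) d (C H : 'M[R]_d) : psd C -> psd H -> 0 <= frob C H.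
Proof.
move=> psdC.
suff supp_ind k H' : psd H' ->
    (forall i j : 'I_d, (k <= i)%N || (k <= j)%N -> H' i j = 0) -> 0 <= frob C H'.
  by move=> psdH; apply: (supp_ind d) => // i j; rewrite leqNgt ltn_ord leqNgt ltn_ord.
elim: k H' => [|k IH] {}H psdH suppH.
  by rewrite /frob big1 // => i _; rewrite big1 // => j _; rewrite suppH ?mulr0.
have [k_lt_d | d_le_k] := ltnP k d; last first.
  apply: IH => // i j.
  by rewrite leqNgt (leq_trans (ltn_ord i) d_le_k) leqNgt (leq_trans (ltn_ord j) d_le_k).
pose r := Ordinal k_lt_d.
have shrink (H' : 'M[R]_d) : psd H' -> (forall j, H' r j = 0) ->
    (forall i j : 'I_d, (k < i)%N || (k < j)%N -> H' i j = 0) ->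
    forall i j : 'I_d, (k <= i)%N || (k <= j)%N -> H' i j = 0.
  move=> psdH' row_r0 suppH' i j.
  rewrite [(k <= i)%N]leq_eqVlt [(k <= j)%N]leq_eqVlt.
  case/orP => [/orP[/eqP k_i | k_lt_i] | /orP[/eqP k_j | k_lt_j]].
  - by have -> : i = r by apply: val_inj.
  - by apply: suppH'; rewrite k_lt_i.
  - have -> : j = r by apply: val_inj.
    by rewrite (psd_entryC _ _ psdH').
  - by apply: suppH'; rewrite k_lt_j orbT.
have [Hrr0 | Hrr_gt0] := eqVneq (H r r) 0.
  by apply: (IH _ psdH); apply: shrink => // j; apply: psd_diag0_row0.
have {}Hrr_gt0 : 0 < H r r by rewrite lt_neqAle eq_sym Hrr_gt0 psd_diag_ge0.
pose h := (row r H)^T.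
have -> : H = (H - (H r r)^-1 *: (h *m h^T)) + (H r r)^-1 *: (h *m h^T) by rewrite subrK.
rewrite frobDr frobZr -qform_frob; apply: addr_ge0; last first.
  by apply: mulr_ge0; [rewrite invr_ge0 ltW | case: psdC => _; apply].
have psdH' := psd_sub_pivot psdH Hrr_gt0.
apply: (IH _ psdH'); apply: shrink => // [j | i j k_lt].
  by rewrite sub_outer_rowE mulrA mulVf ?gt_eqF // mul1r subrr.
rewrite sub_outer_rowE; case/orP: k_lt => k_lt.
  by rewrite (psd_entryC r i psdH) (suppH i j) ?(suppH i r) ?k_lt // mul0r mulr0 subr0.
by rewrite (suppH i j) ?(suppH r j) ?k_lt ?orbT // !mulr0 subr0.
Qed.

Lemma ler_frob (R : realType) m n (A1 A2 B : 'M[R]_(m, n)) :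
  mx_le A1 A2 -> mx_le 0 B -> frob A1 B <= frob A2 B.
Proof.
move=> le_A B_ge0; apply: ler_sum => i _; apply: ler_sum => j _.
by apply: ler_wpM2r => //; move: (B_ge0 i j); rewrite mxE.
Qed.

Lemma weak_duality (R : realType) d (lam : R) (Cmin Cmax : 'M[R]_d)
    (bmin bmax th : 'cV[R]_d) C b A B dv e H :
  primal_feas Cmin Cmax bmin bmax C b -> dual_feas th A B dv e H ->
  primal_obj lam th C b <= dual_obj lam Cmin Cmax bmin bmax th A B dv e.
Proof.
move=> [Cmin_le_C C_le_Cmax bmin_le_b b_le_bmax psdC].
move=> [eqC eqb A_ge0 B_ge0 [dv_ge0 e_ge0 psdH]].
rewrite /primal_obj /dual_obj qform_frob.
have -> : th *m th^T = B - A - H.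
  by apply/matrixP => i j; move/matrixP: eqC => /(_ i j); rewrite !mxE; lra.
have -> : 2 * frob b th = frob b dv - frob b e.
  rewrite -frobZr -frobNr -frobDr; congr frob.
  by apply/matrixP => i j; move/matrixP: eqb => /(_ i j); rewrite !mxE; lra.
rewrite !(frobDr, frobNr).
have := frob_psd_ge0 psdC psdH.
have := ler_frob C_le_Cmax B_ge0; have := ler_frob Cmin_le_C A_ge0.
have := ler_frob b_le_bmax e_ge0; have := ler_frob bmin_le_b dv_ge0.
lra.
Qed.

Definition pos_part (R : realType) m n (N : 'M[R]_(m, n)) := map_mx (Num.max ^~ 0) N.

Lemma pos_part_ge0 (R : realType) m n (N : 'M[R]_(m, n)) : mx_le 0 (pos_part N).
Proof. by move=> i j; rewrite !mxE le_max lexx orbT. Qed.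

Lemma mul_pos_part_sub (R : realType) (a b x : R) : a <= b ->
  b * Num.max x 0 - a * Num.max (- x) 0 = Num.max (b * x) (a * x).
Proof.
move=> le_ab; have [x_ge0 | x_lt0] := boolP (0 <= x); last rewrite -ltNge in x_lt0.
- have -> : Num.max x 0 = x by apply/max_idPl.
  have -> : Num.max (- x) 0 = 0 by apply/max_idPr; rewrite oppr_le0.
  have -> : Num.max (b * x) (a * x) = b * x by apply/max_idPl; rewrite ler_wpM2r.
  by rewrite mulr0 subr0.
- have -> : Num.max x 0 = 0 by apply/max_idPr; rewrite ltW.
  have -> : Num.max (- x) 0 = - x by apply/max_idPl; rewrite oppr_ge0 ltW.
  have -> : Num.max (b * x) (a * x) = a * x by apply/max_idPr; rewrite ler_wnM2r // ltW.
  by rewrite mulr0 sub0r mulrN opprK.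
Qed.

Lemma pos_partB (R : realType) m n (N : 'M[R]_(m, n)) : pos_part N - pos_part (- N) = N.
Proof.
apply/matrixP => i j; rewrite !mxE.
by have := @mul_pos_part_sub R 1 1 (N i j) (lexx _); rewrite !mul1r maxxx.
Qed.

Lemma frob_delta (R : realType) m n (X : 'M[R]_(m, n)) i j :
  frob X (delta_mx i j) = X i j.
Proof.
rewrite /frob (bigD1 i) //= [X in _ + X]big1 ?addr0 => [|i' neq_i'i]; last first.
  by rewrite big1 // => j' _; rewrite mxE (negbTE neq_i'i) mulr0.
rewrite (bigD1 j) //= [X in _ + X]big1 ?addr0 => [|j' neq_j'j].
  by rewrite mxE !eqxx mulr1.
by rewrite mxE (negbTE neq_j'j) andbF mulr0.
Qed.

Section BoxSupport.
Variables (R : realType) (d : nat) (Cmin Cmax : 'M[R]_d).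
Hypothesis Cmin_le_Cmax : mx_le Cmin Cmax.

(* The support function [N |-> sup { frob C N | Cmin <= C <= Cmax }] of the box. *)
Definition box_support (N : 'M[R]_d) : R :=
  \sum_i \sum_j Num.max (Cmax i j * N i j) (Cmin i j * N i j).

Lemma box_support_subadd N1 N2 : box_support (N1 + N2) <= box_support N1 + box_support N2.
Proof.
rewrite /box_support -big_split; apply: ler_sum => i _.
rewrite -big_split; apply: ler_sum => j _ /=; rewrite mxE ge_max !mulrDr.
by rewrite !lerD ?le_max ?lexx ?orbT.
Qed.

Lemma box_support_poshom (k : R) N : 0 <= k -> box_support (k *: N) = k * box_support N.
Proof.
move=> k_ge0; rewrite /box_support mulr_sumr; apply: eq_bigr => i _.
rewrite mulr_sumr; apply: eq_bigr => j _.
by rewrite mxE maxr_pMr // [Cmax i j * _]mulrCA [Cmin i j * _]mulrCA.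
Qed.

Lemma box_support0 : box_support 0 = 0.
Proof. by have := box_support_poshom 0 (lexx 0); rewrite scale0r mul0r. Qed.

Lemma box_support_trmx N : sym_mx Cmin -> sym_mx Cmax -> box_support N^T = box_support N.
Proof.
move=> symCmin symCmax; rewrite /box_support exchange_big /=.
apply: eq_bigr => i _; apply: eq_bigr => j _.
by rewrite mxE -[in LHS]symCmin -[in LHS]symCmax !mxE.
Qed.

Lemma box_support_delta (k : R) i j :
  box_support (k *: delta_mx i j) = Num.max (Cmax i j * k) (Cmin i j * k).
Proof.
rewrite /box_support (bigD1 i) //= [X in _ + X]big1 ?addr0 => [|i' neq_i'i]; last first.
  by rewrite big1 // => j' _; rewrite !mxE (negbTE neq_i'i) !mulr0 maxxx.
rewrite (bigD1 j) //= [X in _ + X]big1 ?addr0 => [|j' neq_j'j].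
  by rewrite !mxE !eqxx mulr1.
by rewrite !mxE (negbTE neq_j'j) andbF !mulr0 maxxx.
Qed.

Lemma frob_pos_part_sub N :
  frob Cmax (pos_part N) - frob Cmin (pos_part (- N)) = box_support N.
Proof.
rewrite /frob -sumrB; apply: eq_bigr => i _; rewrite -sumrB; apply: eq_bigr => j _.
by rewrite !mxE mul_pos_part_sub.
Qed.

End BoxSupport.

Section ConeSupport.
Variables (R : realType) (d : nat) (Cmin Cmax : 'M[R]_d).
Hypotheses (Cmin_sym : sym_mx Cmin) (Cmax_sym : sym_mx Cmax).
Hypothesis Cmin_le_Cmax : mx_le Cmin Cmax.

Let phi := box_support Cmin Cmax.

(* By conic duality, the support function of the box intersected with the PSD
   cone.  [inf] of a set unbounded below is junk, whence [phi_psd_lbound]. *)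
Definition cone_support (N : 'M[R]_d) : R := inf [set phi (N + H) | H in @psd R d].

Hypothesis phi_psd_lbound : exists m, forall H, psd H -> m <= phi H.

Lemma cone_support_le N H : psd H -> cone_support N <= phi (N + H).
Proof.
move=> psdH; apply: ge_inf; last by exists H.
have [m m_lb] := phi_psd_lbound; exists (m - phi (- N)) => _ [H' psdH' <-].
have := box_support_subadd Cmin Cmax (N + H') (- N).
by rewrite addrAC subrr add0r -/phi; have := m_lb _ psdH'; lra.
Qed.

Lemma cone_support_ge N m :
  (forall H, psd H -> m <= phi (N + H)) -> m <= cone_support N.
Proof.
move=> m_lb; apply: lb_le_inf; first by exists (phi (N + 0)), 0; last split; apply: psd0.
by move=> _ [H psdH <-]; apply: m_lb.
Qed.

Lemma cone_support_le_box N : cone_support N <= phi N.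
Proof. by have := cone_support_le N (@psd0 R d); rewrite addr0. Qed.

Lemma cone_support_subadd N1 N2 :
  cone_support (N1 + N2) <= cone_support N1 + cone_support N2.
Proof.
suff H2_bound H2 : psd H2 -> cone_support (N1 + N2) - phi (N2 + H2) <= cone_support N1.
  have : cone_support (N1 + N2) - cone_support N1 <= cone_support N2.
    by apply: cone_support_ge => H2 psdH2; have := H2_bound _ psdH2; lra.
  lra.
move=> psdH2; apply: cone_support_ge => H1 psdH1.
have := cone_support_le (N1 + N2) (psdD psdH1 psdH2).
have := box_support_subadd Cmin Cmax (N1 + H1) (N2 + H2).
by rewrite addrACA -/phi; lra.
Qed.

Lemma cone_support_poshom_le (k : R) N : 0 < k ->
  cone_support (k *: N) <= k * cone_support N.
Proof.
move=> k_gt0; rewrite -ler_pdivrMl //; apply: cone_support_ge => H psdH.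
have := cone_support_le (k *: N) (psdZ (ltW k_gt0) psdH).
rewrite -scalerDr /phi (box_support_poshom _ _ _ (ltW k_gt0)) => le_kphi.
by rewrite ler_pdivrMl.
Qed.

Lemma cone_support_poshom (k : R) N : 0 < k ->
  cone_support (k *: N) = k * cone_support N.
Proof.
move=> k_gt0; apply/eqP; rewrite eq_le cone_support_poshom_le //=.
have kV_gt0 : 0 < k^-1 by rewrite invr_gt0.
have := cone_support_poshom_le (k *: N) kV_gt0.
by rewrite scalerA mulVf ?gt_eqF // scale1r ler_pdivlMl.
Qed.

Lemma cone_support_trmx N : cone_support N^T = cone_support N.
Proof.
suff le_trmx N' : cone_support N'^T <= cone_support N'.
  by apply/eqP; rewrite eq_le le_trmx /= -{1}(trmxK N) le_trmx.
apply: cone_support_ge => H psdH; apply: le_trans (cone_support_le _ psdH) _.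
have <- : (N' + H)^T = N'^T + H by rewrite linearD /= psdH.1.
by rewrite /phi box_support_trmx.
Qed.

Lemma cone_support_linear_minorant N0 :
  exists C : 'M[R]_d, (forall N, frob C N <= cone_support N) /\
                      frob C N0 = cone_support N0.
Proof.
have [c c_dom] := hahn_banach_span cone_support_subadd cone_support_poshom
  (fun ij : 'I_d * 'I_d => delta_mx ij.1 ij.2) N0 (index_enum_uniq _).
pose C := \matrix_(i, j) c (i, j).
have dom t0 N : t0 * cone_support N0 + frob C N <= cone_support (t0 *: N0 + N).
  have := c_dom t0 (fun ij => N ij.1 ij.2).
  rewrite -(pair_bigA _ (fun i j => N i j *: delta_mx i j)) -matrix_sum_delta.
  suff -> : frob C N = \sum_ij N ij.1 ij.2 * c ij by [].
  by rewrite frobC /frob pair_bigA; apply: eq_bigr => -[i j] _; rewrite mxE.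
have dom0 N : frob C N <= cone_support N.
  by have := dom 0 N; rewrite mul0r add0r scale0r add0r.
exists C; split => //.
have cone0 : cone_support 0 = 0 := sublinear0 cone_support_poshom.
have := dom 1 (- N0); have := dom (-1) N0.
rewrite scale1r scaleN1r subrr addNr cone0 frobNr mul1r mulN1r.
by have := dom0 N0; lra.
Qed.

Lemma box_psd_of_minorant C : sym_mx C ->
  (forall N, frob C N <= cone_support N) -> [/\ mx_le Cmin C, mx_le C Cmax & psd C].
Proof.
move=> symC C_dom; split.
- move=> i j; have := C_dom ((-1) *: delta_mx i j).
  have := cone_support_le_box ((-1) *: delta_mx i j).
  rewrite frobZr frob_delta /phi box_support_delta !mulrN1.
  have := Cmin_le_Cmax i j; rewrite -lerN2 => /max_idPr ->; lra.
- move=> i j; have := C_dom (1 *: delta_mx i j).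
  have := cone_support_le_box (1 *: delta_mx i j).
  rewrite frobZr frob_delta /phi box_support_delta !mulr1.
  have := Cmin_le_Cmax i j => /max_idPl ->; lra.
- split=> // x; rewrite -/(qform C x) qform_frob.
  have := C_dom (- (x *m x^T)); have := cone_support_le (- (x *m x^T)) (psd_outer x).
  by rewrite addNr /phi box_support0 frobNr; lra.
Qed.

Lemma exists_feasible_attaining N0 : sym_mx N0 ->
  exists C, [/\ mx_le Cmin C, mx_le C Cmax, psd C & frob C N0 = cone_support N0].
Proof.
move=> symN0; have [C [C_dom C_N0]] := cone_support_linear_minorant N0.
pose Cs := 2^-1 *: (C + C^T).
have frobCs N : frob Cs N = 2^-1 * (frob C N + frob C N^T).
  by rewrite frobC frobZr frobDr frob_trmx !(frobC _ C).
have Cs_dom N : frob Cs N <= cone_support N.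
  by rewrite frobCs; have := C_dom N; have := C_dom N^T; rewrite cone_support_trmx; lra.
have symCs : sym_mx Cs by rewrite /sym_mx /Cs linearZ /= linearD /= trmxK addrC.
have [Cmin_le_Cs Cs_le_Cmax psdCs] := box_psd_of_minorant symCs Cs_dom.
by exists Cs; split => //; rewrite frobCs symN0 C_N0; field.
Qed.

End ConeSupport.

Section InnerDuality.
Variables (R : realType) (d : nat) (lam : R).
Variables (Cmin Cmax : 'M[R]_d) (bmin bmax th : 'cV[R]_d).
Hypotheses (Cmin_sym : sym_mx Cmin) (Cmax_sym : sym_mx Cmax).
Hypotheses (Cmin_le_Cmax : mx_le Cmin Cmax) (bmin_le_bmax : mx_le bmin bmax).

Let phi := box_support Cmin Cmax.
Let M := th *m th^T.

(* [b_opt], [2 pos_part th] and [2 pos_part (- th)] are optimal for [b], [d]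
   and [e] whatever the other variables; [kappa] is their common value. *)
Let b_opt : 'cV[R]_d := \matrix_(i, j) (if 0 <= th i j then bmin i j else bmax i j).
Let kappa :=
  - frob bmin (2 *: pos_part th) + frob bmax (2 *: pos_part (- th)) + lam * sqnorm th.

Lemma inner_min_le_box_support H :
  psd H -> (inner_min lam Cmin Cmax bmin bmax th <= (phi (M + H) + kappa)%:E)%E.
Proof.
move=> psdH; apply: ereal_inf_lbound.
exists (pos_part (- (M + H))), (pos_part (M + H)), (2 *: pos_part th),
  (2 *: pos_part (- th)), H; split.
  split.
  - apply/matrixP => i j; have /matrixP/(_ i j) := pos_partB (M + H).
    by rewrite !mxE; lra.
  - apply/matrixP => i j; have /matrixP/(_ i j) := pos_partB th.
    by rewrite !mxE; lra.
  - exact: pos_part_ge0.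
  - exact: pos_part_ge0.
  - by split=> // i j; rewrite !mxE mulr_ge0 // le_max lexx orbT.
congr EFin; rewrite /dual_obj /kappa /phi -(frob_pos_part_sub Cmin_le_Cmax); lra.
Qed.

Lemma b_opt_feas : mx_le bmin b_opt /\ mx_le b_opt bmax.
Proof. by split=> i j; rewrite !mxE; case: ifP => _ //; apply: bmin_le_bmax. Qed.

Lemma frob_b_opt : - (2 * frob b_opt th)
  = - frob bmin (2 *: pos_part th) + frob bmax (2 *: pos_part (- th)).
Proof.
rewrite !frobZr /frob !mulr_sumr -!sumrN -big_split; apply: eq_bigr => i _.
rewrite !mulr_sumr -!sumrN -big_split; apply: eq_bigr => j _ /=.
rewrite !mxE; case: ifP => [th_ge0 | /negbT]; last rewrite -ltNge => th_lt0.
- have -> : Num.max (th i j) 0 = th i j by apply/max_idPl.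
  have -> : Num.max (- th i j) 0 = 0 by apply/max_idPr; rewrite oppr_le0.
  by ring.
- have -> : Num.max (th i j) 0 = 0 by apply/max_idPr; rewrite ltW.
  have -> : Num.max (- th i j) 0 = - th i j by apply/max_idPl; rewrite oppr_ge0 ltW.
  by ring.
Qed.

Lemma inner_max_ge C : mx_le Cmin C -> mx_le C Cmax -> psd C ->
  ((frob C M + kappa)%:E <= inner_max lam Cmin Cmax bmin bmax th)%E.
Proof.
move=> Cmin_le_C C_le_Cmax psdC; apply: ereal_sup_ubound.
have [bmin_le_b b_le_bmax] := b_opt_feas.
exists C, b_opt; split; first by split.
by congr EFin; rewrite /primal_obj qform_frob /kappa; have := frob_b_opt; lra.
Qed.

Lemma inner_min_unbounded : ~ (exists m, forall H, psd H -> m <= phi H) ->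
  inner_min lam Cmin Cmax bmin bmax th = -oo%E.
Proof.
move=> phi_unbounded; apply: eq_ninfty => r.
have [H [psdH phiH_lt]] : exists H, psd H /\ phi H < r - kappa - phi M.
  apply: contrapT => no_H; apply: phi_unbounded; exists (r - kappa - phi M) => H psdH.
  by rewrite leNgt; apply/negP => phiH_lt; apply: no_H; exists H.
apply: le_trans (inner_min_le_box_support psdH) _; rewrite lee_fin.
by have := box_support_subadd Cmin Cmax M H; rewrite -/phi; lra.
Qed.

Lemma inner_min_le_cone_support :
  (inner_min lam Cmin Cmax bmin bmax th <= (cone_support Cmin Cmax M + kappa)%:E)%E.
Proof.
case E: inner_min => [r | |]; last by rewrite leNye.
  have : r - kappa <= cone_support Cmin Cmax M.
    apply: cone_support_ge => H psdH.
    by have := inner_min_le_box_support psdH; rewrite E lee_fin /phi; lra.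
  by rewrite lee_fin; lra.
by have := inner_min_le_box_support (@psd0 R d); rewrite E.
Qed.

Lemma inner_max_eq_inner_min :
  inner_max lam Cmin Cmax bmin bmax th = inner_min lam Cmin Cmax bmin bmax th.
Proof.
apply/eqP; rewrite eq_le; apply/andP; split.
  apply: ge_ereal_sup => _ [C [b [feas_primal ->]]].
  apply: le_ereal_inf_tmp => _ [A [B [dv [e [H [feas_dual ->]]]]]].
  by rewrite lee_fin; apply: (weak_duality lam feas_primal feas_dual).
have [phi_bounded | phi_unbounded] := pselect (exists m, forall H, psd H -> m <= phi H);
  last by rewrite inner_min_unbounded // leNye.
have symM : sym_mx M by rewrite /sym_mx trmx_mul trmxK.
have [C [Cmin_le_C C_le_Cmax psdC frobCM]] :=
  exists_feasible_attaining Cmin_sym Cmax_sym Cmin_le_Cmax phi_bounded symM.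
apply: le_trans (inner_max_ge Cmin_le_C C_le_Cmax psdC).
by rewrite frobCM inner_min_le_cone_support.
Qed.

End InnerDuality.

Theorem theorem3 (R : realType) (d : nat) (lam : R)
    (Cmin Cmax : 'M[R]_d) (bmin bmax : 'cV[R]_d) :
  0 < lam ->
  sym_mx Cmin -> sym_mx Cmax ->
  mx_le Cmin Cmax -> mx_le bmin bmax ->
  (forall th : 'cV[R]_d,
     inner_max lam Cmin Cmax bmin bmax th = inner_min lam Cmin Cmax bmin bmax th)
  /\
  ereal_inf [set v : \bar R | exists th : 'cV[R]_d,
                 v = inner_max lam Cmin Cmax bmin bmax th]
  = ereal_inf [set v : \bar R | exists (th : 'cV[R]_d) (A B : 'M[R]_d)
                 (dv e : 'cV[R]_d) (H : 'M[R]_d),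
                 dual_feas th A B dv e H /\
                 v = (dual_obj lam Cmin Cmax bmin bmax th A B dv e)%:E].
Proof.
move=> _ Cmin_sym Cmax_sym Cmin_le_Cmax bmin_le_bmax.
have strong_duality th :=
  inner_max_eq_inner_min lam th Cmin_sym Cmax_sym Cmin_le_Cmax bmin_le_bmax.
split=> //; apply/eqP; rewrite eq_le; apply/andP; split.
- apply: le_ereal_inf_tmp => _ [th [A [B [dv [e [H [? ->]]]]]]].
  apply: le_trans (ereal_inf_lbound _) _; first by exists th.
  by rewrite strong_duality; apply: ereal_inf_lbound; exists A, B, dv, e, H.
- apply: le_ereal_inf_tmp => _ [th ->]; rewrite strong_duality.
  apply: le_ereal_inf_tmp => _ [A [B [dv [e [H [? ->]]]]]].
  by apply: ereal_inf_lbound; exists th, A, B, dv, e, H.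
Qed.
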